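(* Let $d$ be odd and $s$ even with $s\mid d-1$. Let $G=\langle\tau\rangle\rtimes\langle\sigma\rangle$ with $\tau$ of order $d$, $\sigma$ of order $s$, conjugation by $\sigma$ an automorphism of $\langle\tau\rangle$ of order exactly $s$, and $\sigma^{s/2}\tau\sigma^{-s/2}=\tau^{-1}$. For $j\in\mathbb{Z}$ let $\theta_j\in\{1,\dots,d-1\}$ be defined by $\sigma^j\tau\sigma^{-j}=\tau^{\theta_j}$. In $\mathbb{Z}[G]$ put $T_\sigma=\sum_{j=0}^{s-1}\sigma^j$ and \[\mathcal{B}=(1-\sigma^{s/2})\tau^{\frac{d+1}{2}}\sum_{j=0}^{\frac{s}{2}-1}\Big(\sum_{i=0}^{\theta_j-1}\tau^i\Big)\sigma^j.\] Then (i) $\sigma^{s/2}\mathcal{B}=-\mathcal{B}$, and (ii) $(1-\tau)\mathcal{B}=\tau^{\frac{d+1}{2}}T_\sigma(1-\tau)$. *)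

(* The integral group ring Z[gT] of a finite group gT,
   realised as integer-valued functions on gT with convolution product. *)
From HB Require Import structures.
From mathcomp Require Import all_boot all_order all_algebra all_fingroup all_solvable.
Set Implicit Arguments. Unset Strict Implicit. Unset Printing Implicit Defensive.
Import GRing.Theory.
Local Open Scope ring_scope.

Definition grring (gT : finGroupType) := {ffun gT -> int}.

Definition gr_of (gT : finGroupType) (g : gT) : {ffun gT -> int} :=
  [ffun x => (x == g)%:R].

Definition gr_mul (gT : finGroupType) (a b : {ffun gT -> int}) : {ffun gT -> int} :=
  [ffun g => \sum_(h : gT) a h * b (h^-1 * g)%g].

From HB Require Import structures.
From mathcomp Require Import all_boot all_order all_algebra all_fingroup all_solvable.
Import GRing.Theory.
Local Open Scope ring_scope.

(* Put t = tau, c = sigma^(s/2) and v = tau^((d+1)/2), so that t = v^2 and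
   conjugation by c inverts v.  Part (i) is c (1 - c) = -(1 - c), as c^2 = 1.
   Part (ii) rests on the identity (1 - t)(1 - c) v = v (1 + c)(1 - t), which
   only needs c v = v^-1 c.  Then 1 - t moves past each summand by telescoping,
   (1 - t)(1 + t + ... + t^(theta_j - 1)) sigma^j = (1 - t^theta_j) sigma^j
   = sigma^j (1 - t), and finally (1 + c)(1 + sigma + ... + sigma^(s/2 - 1))
   = T_sigma. *)

(* The cast matters: {ffun gT -> int} already carries the pointwise ring
   structure, while the convolution ring is declared on [grring gT]. *)
Notation "x %:ZG" := (gr_of x : grring _)
  (at level 2, left associativity, format "x %:ZG").

Lemma mul1DX_sum_expr (R : pzSemiRingType) (x : R) n :
  (1 + x ^+ n) * \sum_(j < n) x ^+ j = \sum_(j < n + n) x ^+ j.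
Proof.
rewrite mulrDl mul1r mulr_sumr big_split_ord /=; congr (_ + _).
by apply: eq_bigr => j _; rewrite -exprD.
Qed.

Section GroupRing.
Context {gT : finGroupType}.

HB.instance Definition _ := GRing.Zmodule.on (grring gT).

Lemma gr_mulA : associative (@gr_mul gT : grring gT -> _ -> _).
Proof.
move=> a b c; apply/ffunP=> g; apply/esym; rewrite ffunE.
under eq_bigr do rewrite ffunE big_distrl.
rewrite exchange_big ffunE /=; apply: eq_bigr => k _.
rewrite ffunE big_distrr /= (reindex_inj (mulgI k)) /=.
by apply: eq_bigr => l _; rewrite mulrA invMg !mulgA mulVg mul1g.
Qed.

Lemma gr_mull_of (a : grring gT) x :
  gr_mul (gr_of x) a = [ffun g => a (x^-1 * g)%g].
Proof.
apply/ffunP=> g; rewrite !ffunE (bigD1 x) //= big1 ?addr0.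
  by rewrite ffunE eqxx mul1r.
by move=> h /negPf hx; rewrite ffunE hx mul0r.
Qed.

Lemma gr_mulr_of (a : grring gT) x :
  gr_mul a (gr_of x) = [ffun g => a (g * x^-1)%g].
Proof.
apply/ffunP=> g; rewrite !ffunE (bigD1 (g * x^-1)%g) //= big1 ?addr0.
  by rewrite ffunE invMg invgK mulgKV eqxx mulr1.
move=> h /negPf hg; rewrite ffunE; case: eqP => [hx|]; last by rewrite mulr0.
by move: hg; rewrite -hx invMg invgK mulKVg eqxx.
Qed.

Lemma gr_mul1r : left_id (gr_of 1%g) (@gr_mul gT : grring gT -> _ -> _).
Proof. by move=> a; rewrite gr_mull_of; apply/ffunP=> g; rewrite ffunE invg1 mul1g. Qed.

Lemma gr_mulr1 : right_id (gr_of 1%g) (@gr_mul gT : grring gT -> _ -> _).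
Proof. by move=> a; rewrite gr_mulr_of; apply/ffunP=> g; rewrite ffunE invg1 mulg1. Qed.

Lemma gr_mulDl : left_distributive (@gr_mul gT : grring gT -> _ -> _) +%R.
Proof.
move=> a b c; apply/ffunP=> g; rewrite !ffunE -big_split /=.
by apply: eq_bigr => h _; rewrite ffunE mulrDl.
Qed.

Lemma gr_mulDr : right_distributive (@gr_mul gT : grring gT -> _ -> _) +%R.
Proof.
move=> a b c; apply/ffunP=> g; rewrite !ffunE -big_split /=.
by apply: eq_bigr => h _; rewrite ffunE mulrDr.
Qed.

HB.instance Definition _ := GRing.Zmodule_isPzRing.Build (grring gT)
  gr_mulA gr_mul1r gr_mulr1 gr_mulDl gr_mulDr.

Lemma gr_of_mul x y : x%:ZG * y%:ZG = (x * y)%g%:ZG.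
Proof.
rewrite [LHS]gr_mull_of; apply/ffunP=> g; rewrite !ffunE.
suff -> : ((x^-1 * g)%g == y) = (g == (x * y)%g) by [].
by apply/eqP/eqP=> [<-|->]; rewrite ?mulKVg ?mulKg.
Qed.

Lemma gr_ofX x n : (x ^+ n)%g%:ZG = x%:ZG ^+ n.
Proof.
elim: n => [|n IH]; first by rewrite expg0 expr0.
by rewrite expgS exprS -IH gr_of_mul.
Qed.

Lemma gr_of_commute_1B x y g : (x * g = g * y)%g ->
  (1 - x%:ZG) * g%:ZG = g%:ZG * (1 - y%:ZG).
Proof. by move=> xg; rewrite mulrBl mulrBr mul1r mulr1 !gr_of_mul xg. Qed.

Lemma gr_of_conj_geometric t g k : (g * t * g^-1 = t ^+ k)%g ->
  (1 - t%:ZG) * ((\sum_(i < k) (t ^+ i)%g%:ZG) * g%:ZG) = g%:ZG * (1 - t%:ZG).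
Proof.
move=> gt; under eq_bigr do rewrite gr_ofX.
rewrite mulrA -opprB mulNr -subrX1 !opprB -gr_ofX.
by apply: gr_of_commute_1B; rewrite -gt mulgKV.
Qed.

Lemma gr_of_inverting_conj c v : (c * v * c^-1 = v^-1)%g ->
  (1 - (v * v)%g%:ZG) * (1 - c%:ZG) * v%:ZG
    = v%:ZG * (1 + c%:ZG) * (1 - (v * v)%g%:ZG).
Proof.
move=> cv; have {}cv : (c * v = v^-1 * c)%g by rewrite -cv mulgKV.
rewrite !(mulrBl, mulrBr, mulrDl, mulrDr, mul1r, mulr1) !gr_of_mul.
have -> : (v * v * c * v = v * c)%g by rewrite -mulgA cv mulgA mulgK.
have -> : (v * c * (v * v) = v^-1 * c)%g.
  by rewrite mulgA -(mulgA v) cv !mulgA mulgV mul1g cv.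
by rewrite cv mulgA opprB opprD !addrA (addrAC v%:ZG) [LHS]addrAC.
Qed.
End GroupRing.

Theorem lemma6p2 (gT : finGroupType) (G : {group gT}) (tau sigma : gT)
    (d s : nat) (theta : nat -> nat)
    (hd : odd d) (hs : ~~ odd s) (hsd : (s %| d.-1)%N)
    (htau : #[tau]%g = d) (hsig : #[sigma]%g = s)
    (hG : (<[tau]> ><| <[sigma]>)%g = G)
    (haut : forall k : nat, (0 < k < s)%N ->
        (sigma ^+ k * tau * (sigma ^+ k)^-1)%g != tau)
    (hinv : (sigma ^+ s./2 * tau * (sigma ^+ s./2)^-1)%g = (tau^-1)%g)
    (htheta : forall j : nat, (0 < theta j < d)%N /\
        (sigma ^+ j * tau * (sigma ^+ j)^-1)%g = (tau ^+ theta j)%g) :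
  let one := gr_of (1%g : gT) in
  let Tsigma := \sum_(j < s) gr_of (sigma ^+ j)%g in
  let B := gr_mul (gr_mul (one - gr_of (sigma ^+ s./2)%g) (gr_of (tau ^+ d.+1./2)%g))
             (\sum_(j < s./2)
                gr_mul (\sum_(i < theta j) gr_of (tau ^+ i)%g) (gr_of (sigma ^+ j)%g)) in
  gr_mul (gr_of (sigma ^+ s./2)%g) B = - B /\
  gr_mul (one - gr_of tau) B
    = gr_mul (gr_mul (gr_of (tau ^+ d.+1./2)%g) Tsigma) (one - gr_of tau).
Proof.
move=> one Tsigma B; rewrite {}/B {}/Tsigma {}/one.
have mulE (a b : grring gT) : gr_mul a b = a * b by [].
have oneE : gr_of 1%g = 1 :> grring gT by [].
rewrite !mulE oneE.
set h := s./2; set c := (sigma ^+ h)%g; set v := (tau ^+ d.+1./2)%g.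
have s_hh : s = (h + h)%N by rewrite addnn -[LHS]odd_double_half (negPf hs).
have tau_vv : tau = (v * v)%g.
  have m_mm : (d.+1./2 + d.+1./2 = d.+1)%N by rewrite addnn -[RHS]odd_double_half /= hd.
  by rewrite /v -expgD m_mm expgS -htau expg_order mulg1.
have c_inv_v : (c * v * c^-1 = v^-1)%g.
  have conjE x : (c * x * c^-1 = x ^ c^-1)%g by rewrite conjgE invgK mulgA.
  by rewrite conjE conjXg -conjE hinv expgVn.
have cc : (c * c = 1)%g by rewrite -expgD -s_hh -hsig expg_order.
split.
  by rewrite !mulrA mulrBr mulr1 gr_of_mul cc -opprB !mulNr.
have key := gr_of_inverting_conj _ _ c_inv_v; rewrite -tau_vv in key.
rewrite !mulrA key -!mulrA mulr_sumr.
under eq_bigr do rewrite gr_of_conj_geometric ?(proj2 (htheta _)) //.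
have Tsigma_halves :
    (1 + c%:ZG) * \sum_(j < h) (sigma ^+ j)%g%:ZG = \sum_(j < s) (sigma ^+ j)%g%:ZG.
  have sumX n : \sum_(j < n) (sigma ^+ j)%g%:ZG = \sum_(j < n) sigma%:ZG ^+ j.
    by apply: eq_bigr => j _; exact: gr_ofX.
  by rewrite !sumX gr_ofX s_hh mul1DX_sum_expr.
by rewrite -mulr_suml (mulrA (1 + _)) Tsigma_halves mulrA.
Qed.
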